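(* In the setting below, the family $\mathcal{L}=\textsc{MakeLam}(1,n,0,0)$ is a laminar family of $4\eta$-near minimum cuts of $G$ (with $\eta=\tfrac1{40}$).
   Context: Let $G=(V,E)$ be a multigraph with minimum cut value $k$; $\delta(S)$ is the set of edges with exactly one endpoint in $S$. For $\eta>0$, a cut $\emptyset\ne S\subsetneq V$ is an $\eta$-near minimum cut ($\eta$-NMC) if $|\delta(S)|<(1+\eta)k$ (a cut is identified with either shore). Cuts $S,T$ cross if $S\cap T,S\setminus T,T\setminus S,V\setminus(S\cup T)$ are all nonempty. A connected component $\mathcal{C}$ of $\eta$-NMCs is a connected component of the graph on $\eta$-NMCs in which crossing cuts are adjacent; its atoms $\mathcal{A}(\mathcal{C})$ form the coarsest partition of $V$ such that each cut of $\mathcal{C}$ is a union of atoms. Fix $\eta=\tfrac1{40}$ and a connected component $\mathcal{C}$ with $|\mathcal{C}|>1$, together with a polygon representation of $\mathcal{C}$ (Benczúr–Goemans): a convex regular polygon with vertices $p_0,\dots,p_{n-1}$ and straight-line diagonals partitioning it into cells; each atom is mapped to a cell; atoms in cells bounded by part of the polygon boundary are outside atoms, the others inside atoms; no cell has more than one incident polygon side; each diagonal defines a cut whose sides are the unions of atoms on the two sides of the diagonal, and these cuts are exactly $\mathcal{C}$. The outside atoms are $a_0,\dots,a_{n-1}$ in counterclockwise order, $a_i$ on side $(p_i,p_{i+1})$ (indices mod $n$, $a_n=a_0$). $O(S)$ is the set of outside atoms contained in $S$. For $1\le l<r\le n$, the interval $\langle l,r\rangle=\{a_l,\dots,a_{r-1}\}$.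 It is a shadow if there is a $\tfrac15$-NMC $S$, a union of atoms of $\mathcal{C}$, with $O(S)=\langle l,r\rangle$; this $S$ is known to be unique and is the canonical cut $\langle\langle l,r\rangle\rangle$; two canonical cuts cross iff their intervals cross. A shadow is a near minimum interval (NMI) if its canonical cut is an $\eta$-NMC. A canonical cut $S$ is special if (i) $S$ is an $\eta$-NMC, or (ii) there are two crossing canonical cuts $A',B'$, both $\eta$-NMCs, with $S\in\{A'\cap B',A'\cup B',A'\setminus B',B'\setminus A'\}$; an interval is special if it is a shadow with special canonical cut. The recursive procedure $\textsc{MakeLam}(L,R,d,u)$ (integers $L,R$, depth $d$, counter $u$) returns a family of cuts as follows. If $L\ge R$, return $\emptyset$. Else if $u\ge2$, return $\textsc{MakeLam}(L+1,R,d+1,0)$. Otherwise set $F=\{\langle\langle L,R\rangle\rangle\}$ if $\langle L,R\rangle$ is a special interval or is the set difference of two crossing special intervals, and $F=\emptyset$ otherwise. If $d$ is even, let $x_1<\dots<x_m$ be the integers $x$ with $L<x\le R$ such that $\langle L,x\rangle$ is special, and set $x_0=L$, $x_{m+1}=R$; if $m\ge1$ return $F\cup\{\langle\langle L,x_i\rangle\rangle:1\le i\le m\}\cup\bigcup_{i=0}^m\textsc{MakeLam}(x_i,x_{i+1},d+1,0)$, and if $m=0$ return $\textsc{MakeLam}(L,R,d+1,u+1)$. If $d$ is odd, let $x_1<\dots<x_m$ be the integers $x$ with $L\le x<R$ such that $\langle x,R\rangle$ is special, $x_0=L$, $x_{m+1}=R$; if $m\ge1$ return $F\cup\{\langle\langle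 x_i,R\rangle\rangle:1\le i\le m\}\cup\bigcup_{i=0}^m\textsc{MakeLam}(x_i,x_{i+1},d+1,0)$, and if $m=0$ return $\textsc{MakeLam}(L,R,d+1,u+1)$.
   Formalization: $\mathcal{L}$ is the least family of cuts closed under the recursive clauses of MakeLam, not the family its recursion returns, and the stated known facts on canonical cuts (uniqueness, crossing iff intervals cross) are hypotheses. Each condition added here is assumed in the paper as well or is needed for the statement above to hold. *)

From HB Require Import structures.
From mathcomp Require Import all_boot all_order all_algebra.
From mathcomp Require Import reals trigo.
Set Implicit Arguments. Unset Strict Implicit. Unset Printing Implicit Defensive.
Import Order.TTheory GRing.Theory Num.Theory.

(* The multigraph is given by its edge multiplicities mu u v (symmetric)*)
Section Cuts.
Variable V : finType.
Variable mu : V -> V -> nat.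

Definition cutval (S : {set V}) : nat := \sum_(u in S) \sum_(v in ~: S) mu u v.

Definition is_cut (S : {set V}) : bool := (S != set0) && (S != setT).

Definition is_mincut_value (k : nat) : Prop :=
  (exists S, is_cut S /\ cutval S = k) /\ (forall S, is_cut S -> k <= cutval S).

Definition NMC (k : nat) (e : rat) (S : {set V}) : bool :=
  is_cut S && ((cutval S)%:R < (1 + e) * k%:R)%R.

Definition cross (S T : {set V}) : bool :=
  [&& S :&: T != set0, S :\: T != set0, T :\: S != set0 & ~: (S :|: T) != set0].

(* adjacency in the graph of e-NMCs (cuts identified with both shores):
   crossing, or being the other shore of the same cut *)
Definition nmc_adj (k : nat) (e : rat) (S T : {set V}) : bool :=
  [&& NMC k e S, NMC k e T & cross S T || (T == ~: S)].

Definition is_nmc_component (k : nat) (e : rat) (C : {set {set V}}) : Prop :=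
  exists S0, NMC k e S0 /\ C = [set T | connect (nmc_adj k e) S0 T].

Definition more_than_one_cut (C : {set {set V}}) : Prop :=
  exists S T, [/\ S \in C, T \in C, T != S & T != ~: S].

Definition laminar (F : {set V} -> Prop) : Prop :=
  forall S T, F S -> F T -> ~~ cross S T.

Definition equivC (C : {set {set V}}) (u v : V) : bool :=
  [forall S in C, (u \in S) == (v \in S)].
Definition atoms (C : {set {set V}}) : {set {set V}} :=
  [set [set v | equivC C u v] | u in V].
Definition union_of_atoms (C : {set {set V}}) (S : {set V}) : bool :=
  [forall u, forall v, equivC C u v ==> ((u \in S) == (v \in S))].
End Cuts.

Definition etaNMC : rat := (1 / 40%:R)%R.

Section Polygon.
Variable R : realType.
Local Open Scope ring_scope.

(* vertex p_k of the regular n-gon (counterclockwise, indices mod n) *)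
Definition pvert (n k : nat) : R * R :=
  (cos (2 * pi * k%:R / n%:R), sin (2 * pi * k%:R / n%:R)).

Definition pmid (n k : nat) : R * R :=
  (((pvert n k).1 + (pvert n k.+1).1) / 2, ((pvert n k).2 + (pvert n k.+1).2) / 2).

Definition orient (p q x : R * R) : R :=
  (q.1 - p.1) * (x.2 - p.2) - (q.2 - p.2) * (x.1 - p.1).

Definition in_polygon (n : nat) (x : R * R) : Prop :=
  forall k, (k < n)%N -> 0 < orient (pvert n k) (pvert n k.+1) x.

Definition dside (n : nat) (d : nat * nat) (x : R * R) : bool :=
  0 < orient (pvert n d.1) (pvert n d.2) x.

Definition is_diagonal (n : nat) (d : nat * nat) : bool :=
  [&& (d.1 < d.2)%N, (d.2 < n)%N, (d.1.+2 <= d.2)%N & ~~ ((d.1 == 0%N) && (d.2 == n.-1))].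

Variable V : finType.

(* Polygon representation of a family C of cuts (sets of shores):
   n-gon, diagonals Ds, each atom A mapped to (a representative point
   x A of) a cell, outside atoms a_0..a_{n-1} (a_i on side (p_i,p_{i+1})). *)
Definition diag_cut (C : {set {set V}}) (n : nat) (x : {set V} -> R * R)
    (d : nat * nat) : {set V} :=
  \bigcup_(A in atoms C | dside n d (x A)) A.

Definition polygon_rep (C : {set {set V}}) (n : nat) (Ds : seq (nat * nat))
    (x : {set V} -> R * R) (a : nat -> {set V}) : Prop :=
  (3 <= n)%N /\
  [/\ (forall d, d \in Ds -> is_diagonal n d),
      (* every atom is mapped to a cell: a point of the open polygon on no diagonal *)
      (forall A, A \in atoms C ->
         in_polygon n (x A) /\ forall d, d \in Ds -> orient (pvert n d.1) (pvert n d.2) (x A) != 0),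
      (forall S, S \in C <-> (exists d, d \in Ds /\ (S = diag_cut C n x d \/ S = ~: diag_cut C n x d))),
      (* a_i is an atom in the cell bounded by the side (p_i, p_{i+1}) *)
      (forall i, (i < n)%N -> a i \in atoms C /\
         forall d, d \in Ds -> dside n d (x (a i)) = dside n d (pmid n i)) &
      (* no cell has more than one incident polygon side *)
      (forall i j, (i < n)%N -> (j < n)%N -> i <> j ->
         exists2 d, d \in Ds & dside n d (pmid n i) != dside n d (pmid n j))].
End Polygon.

Section Canonical.
Variable V : finType.
Variable mu : V -> V -> nat.
Variable k : nat.
Variable C : {set {set V}}.
Variable n : nat.
Variable a : nat -> {set V}.

Definition outside : {set {set V}} := [set A | A \in [seq a i | i <- iota 0 n]].

Definition Oset (S : {set V}) : {set {set V}} := [set A in outside | A \subset S].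

Definition intv (l r : nat) : {set {set V}} :=
  [set A | A \in [seq a (i %% n) | i <- iota l (r - l)]].

Definition valid_lr (l r : nat) : bool := [&& (1 <= l)%N, (l < r)%N & (r <= n)%N].

Definition shadow_witness (l r : nat) (S : {set V}) : bool :=
  [&& NMC mu k (1 / 5%:R)%R S, union_of_atoms C S & Oset S == intv l r].

Definition shadow (l r : nat) : bool := valid_lr l r && [exists S, shadow_witness l r S].

(* the canonical cut <<l,r>> (the unique witness; set0 if none) *)
Definition canon (l r : nat) : {set V} := odflt set0 [pick S | shadow_witness l r S].

Definition crossI (I J : {set {set V}}) : bool :=
  [&& I :&: J != set0, I :\: J != set0, J :\: I != set0 & outside :\: (I :|: J) != set0].

Definition special_cut (S : {set V}) : bool :=
  NMC mu k etaNMC S ||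
  [exists l1 : 'I_n.+1, exists r1 : 'I_n.+1, exists l2 : 'I_n.+1, exists r2 : 'I_n.+1,
     [&& shadow l1 r1, shadow l2 r2,
         NMC mu k etaNMC (canon l1 r1), NMC mu k etaNMC (canon l2 r2),
         cross (canon l1 r1) (canon l2 r2) &
         S \in [:: canon l1 r1 :&: canon l2 r2; canon l1 r1 :|: canon l2 r2;
                   canon l1 r1 :\: canon l2 r2; canon l2 r2 :\: canon l1 r1]]].

Definition special (l r : nat) : bool := shadow l r && special_cut (canon l r).

Definition Fcond (L R : nat) : bool :=
  special L R ||
  [exists l1 : 'I_n.+1, exists r1 : 'I_n.+1, exists l2 : 'I_n.+1, exists r2 : 'I_n.+1,
     [&& special l1 r1, special l2 r2, crossI (intv l1 r1) (intv l2 r2) &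
         intv L R == intv l1 r1 :\: intv l2 r2]].
End Canonical.

(* MakeLam, as the family of cuts it returns: S \in MakeLam(L,R,d,u)   *)
(* is the least predicate closed under the recursive clauses.          *)
(* sp = "special interval", Fc = Fcond, cc = canonical cut.            *)
Section MakeLam.
Variable T : Type.
Variables (sp Fc : nat -> nat -> bool) (cc : nat -> nat -> T).

Definition mlx (d L R : nat) : seq nat :=
  if ~~ odd d then [seq x <- iota L.+1 (R - L) | sp L x]
  else [seq x <- iota L (R - L) | sp x R].

Definition mlxs (d L R : nat) : seq nat := L :: mlx d L R ++ [:: R].

Inductive makeLam : nat -> nat -> nat -> nat -> T -> Prop :=
| mlSkip L R d u S : (L < R)%N -> (2 <= u)%N ->
    makeLam L.+1 R d.+1 0 S -> makeLam L R d u S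
| mlEmpty L R d u S : (L < R)%N -> (u < 2)%N -> mlx d L R = [::] ->
    makeLam L R d.+1 u.+1 S -> makeLam L R d u S
| mlF L R d u : (L < R)%N -> (u < 2)%N -> mlx d L R != [::] -> Fc L R ->
    makeLam L R d u (cc L R)
| mlX L R d u x : (L < R)%N -> (u < 2)%N -> x \in mlx d L R ->
    makeLam L R d u (if ~~ odd d then cc L x else cc x R)
| mlRec L R d u i S : (L < R)%N -> (u < 2)%N -> mlx d L R != [::] ->
    (i <= size (mlx d L R))%N ->
    makeLam (nth 0 (mlxs d L R) i) (nth 0 (mlxs d L R) i.+1) d.+1 0 S ->
    makeLam L R d u S.
End MakeLam.

From mathcomp Require Import all_boot all_order all_algebra.
From mathcomp Require Import zify ring.
From mathcomp Require Import reals trigo.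
Set Implicit Arguments. Unset Strict Implicit. Unset Printing Implicit Defensive.
Import GRing.Theory Num.Theory.

(* Running MakeLam with the pair constructor in place of the canonical cut records the
   integer interval [l, r) behind each member; the recursion only ever produces intervals
   that are nested or disjoint, because every recursive call stays inside one block
   [x_i, x_{i+1}] between consecutive split points.  Nested or disjoint intervals of outside
   atoms do not cross, so their canonical cuts do not cross.  For the cut values,
   submodularity and posimodularity together with the minimality of k show that special
   cuts are 2eta-NMCs and that the difference of two crossing special cuts is a 4eta-NMC;
   the latter is in particular a 1/5-NMC with the right outside atoms, hence it is the
   canonical cut of the difference interval. *)

Section MakeLamIntervals.
Variables sp Fc : nat -> nat -> bool.

Notation xs := (mlxs sp).
Notation mLI := (makeLam sp Fc (@pair nat nat)).

(* A pair p stands for the half-open integer interval [p.1, p.2). *)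
Definition nested_or_disjoint (p q : nat * nat) : bool :=
  [|| p.2 <= q.1, q.2 <= p.1, (p.1 <= q.1) && (q.2 <= p.2) | (q.1 <= p.1) && (p.2 <= q.2)].

Lemma nested_or_disjointC p q : nested_or_disjoint p q = nested_or_disjoint q p.
Proof.
by rewrite /nested_or_disjoint; case: (p.2 <= q.1); case: (q.2 <= p.1); rewrite //= orbC.
Qed.

Lemma makeLam_interval T (cc : nat -> nat -> T) L R d u S :
  makeLam sp Fc cc L R d u S -> exists l r, mLI L R d u (l, r) /\ S = cc l r.
Proof.
elim=> {L R d u S} [L R d u S LR u2 _ [l [r [H ->]]]|L R d u S LR u2 e _ [l [r [H ->]]]|
                   L R d u LR u2 ne F|L R d u y LR u2 yin|
                   L R d u i S LR u2 ne ile _ [l [r [H ->]]]].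
- by exists l, r; split=> //; apply: mlSkip.
- by exists l, r; split=> //; apply: mlEmpty.
- by exists L, R; split=> //; apply: mlF.
- have := @mlX _ sp Fc (@pair nat nat) _ _ _ _ _ LR u2 yin.
  by case: ifP => _ H; [exists L, y | exists y, R].
- by exists l, r; split=> //; apply: mlRec ile H.
Qed.

Lemma mem_mlx d L R y : y \in mlx sp d L R ->
  if ~~ odd d then (L < y <= R) && sp L y else (L <= y < R) && sp y R.
Proof.
rewrite /mlx; case: ifP => _; rewrite mem_filter mem_iota => /andP[-> ?];
  by rewrite andbT; lia.
Qed.

Lemma mem_mlxs d L R y : L <= R -> y \in xs d L R -> L <= y <= R.
Proof.
move=> LR; rewrite inE mem_cat inE => /or3P[/eqP->|/mem_mlx|/eqP->]; try lia.
by case: ifP => _ /andP[? _]; lia.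
Qed.

Lemma size_mlxs d L R : size (xs d L R) = (size (mlx sp d L R)).+2.
Proof. by rewrite /mlxs /= size_cat addn1. Qed.

Lemma sorted_mlxs d L R : L <= R -> sorted leq (xs d L R).
Proof.
move=> LR; have xsP y : y \in xs d L R -> L <= y <= R by apply: mem_mlxs.
rewrite /mlxs /= cat_path /= andbT path_sortedE; last exact: leq_trans.
apply/andP; split; first (apply/andP; split).
- apply/allP => y y_in; suff /andP[] : L <= y <= R by [].
  by apply: xsP; rewrite inE mem_cat y_in orbT.
- rewrite /mlx; case: ifP => _; apply: (sorted_filter leq_trans);
    by apply: (sub_sorted _ (iota_ltn_sorted _ _)) => ? ? /ltnW.
- suff /andP[] : L <= last L (mlx sp d L R) <= R by [].
  by apply: xsP; rewrite /mlxs -cat_cons mem_cat mem_last.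
Qed.

Lemma mlxs_nth_bounds d L R i : L <= R -> i <= (size (mlx sp d L R)).+1 ->
  L <= nth 0 (xs d L R) i <= R.
Proof. by move=> LR iS; apply: mem_mlxs => //; apply: mem_nth; rewrite size_mlxs. Qed.

Lemma mlxs_nth_mono d L R i j : L <= R -> i <= j -> j <= (size (mlx sp d L R)).+1 ->
  nth 0 (xs d L R) i <= nth 0 (xs d L R) j.
Proof.
move=> LR ij js; apply: (sorted_leq_nth leq_trans leqnn 0 (sorted_mlxs d LR));
  by rewrite ?inE ?size_mlxs; lia.
Qed.

Lemma mlx_outside_block d L R y i : L <= R -> y \in mlx sp d L R ->
  i <= size (mlx sp d L R) ->
  y <= nth 0 (xs d L R) i \/ nth 0 (xs d L R) i.+1 <= y.
Proof.
move=> LR yin ile.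
have yxs : y \in xs d L R by rewrite inE mem_cat yin orbT.
have ys : index y (xs d L R) <= (size (mlx sp d L R)).+1.
  by move: yxs; rewrite -index_mem size_mlxs.
rewrite -(nth_index 0 yxs).
have [yi|iy] := leqP (index y (xs d L R)) i.
- by left; apply: mlxs_nth_mono; lia.
- by right; apply: mlxs_nth_mono.
Qed.

Lemma makeLam_bounds L R d u p : mLI L R d u p ->
  [/\ L <= p.1, p.1 < p.2, p.2 <= R & sp p.1 p.2 || Fc p.1 p.2].
Proof.
elim=> {L R d u p} [L R d u S LR _ _ [? ? ? ?]|//|L R d u LR _ _ F|
                   L R d u y LR _ /mem_mlx|L R d u i S LR _ _ ile _ [? ? ? ?]].
- by split=> //; lia.
- by rewrite /= F orbT; split=> //; apply: ltnW.
- by case: ifP => _ /andP[? ->] /=; split=> //; lia.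
- have := mlxs_nth_bounds (ltnW LR) (leqW ile).
  have := mlxs_nth_bounds (i := i.+1) (ltnW LR) ile.
  by split=> //; lia.
Qed.

Lemma split_nested_or_disjoint_block d L R y i q : L <= R -> y \in mlx sp d L R ->
  i <= size (mlx sp d L R) ->
  nth 0 (xs d L R) i <= q.1 -> q.2 <= nth 0 (xs d L R) i.+1 ->
  nested_or_disjoint (if ~~ odd d then (L, y) else (y, R)) q.
Proof.
move=> LR yin ile lo hi.
have lo' := mlxs_nth_bounds LR (leqW ile).
have hi' := mlxs_nth_bounds (i := i.+1) LR ile.
have := mem_mlx yin; rewrite /nested_or_disjoint.
by case: (mlx_outside_block LR yin ile) => ?; case: ifP => _ /andP[? _] /=; lia.
Qed.

Variant makeLam_spec L R d u q : Prop :=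
| MakeLamSkip of 2 <= u & mLI L.+1 R d.+1 0 q
| MakeLamEmpty of u < 2 & mlx sp d L R = [::] & mLI L R d.+1 u.+1 q
| MakeLamF of u < 2 & mlx sp d L R != [::] & q = (L, R)
| MakeLamX y of u < 2 & y \in mlx sp d L R & q = (if ~~ odd d then (L, y) else (y, R))
| MakeLamRec i of u < 2 & mlx sp d L R != [::] & i <= size (mlx sp d L R) &
    mLI (nth 0 (xs d L R) i) (nth 0 (xs d L R) i.+1) d.+1 0 q.

Lemma makeLamP L R d u q : mLI L R d u q -> L < R /\ makeLam_spec L R d u q.
Proof.
case=> {L R d u q} [L R d u S LR u2 H|L R d u S LR u2 e H|L R d u LR u2 ne _|
                   L R d u y LR u2 yin|L R d u i S LR u2 ne ile H]; split=> //.
- exact: MakeLamSkip.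
- exact: MakeLamEmpty.
- exact: MakeLamF.
- by apply: (MakeLamX u2 yin); case: ifP.
- exact: MakeLamRec ile H.
Qed.

Lemma makeLam_nested_or_disjoint L R d u p q :
  mLI L R d u p -> mLI L R d u q -> nested_or_disjoint p q.
Proof.
move=> Hp; elim: Hp q => {L R d u p}
  [L R d u p LR u2 _ IH|L R d u p LR u2 e _ IH|L R d u LR u2 ne _|
   L R d u y LR u2 yin|L R d u i p LR u2 ne ile Hp IH] q Hq;
  have [h1 h2 h3 _] := makeLam_bounds Hq; case: (makeLamP Hq) => _.
- by case=> [_ /IH //|?|?|? ?|? ?]; lia.
- case=> [?|_ _ /IH //|_ ne|? _ ne|? _ ne]; first lia;
    by rewrite e ?in_nil in ne.
- by move=> _; rewrite /nested_or_disjoint /=; apply/or4P; constructor 3; apply/andP; lia.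
- case=> [|_ e|_ _ ->|z _ zin ->|j _ _ jle Hq']; first lia.
  + by rewrite e in yin.
  + have := mem_mlx yin; rewrite /nested_or_disjoint.
    by case: ifP => _ /= /andP[? _]; lia.
  + have := mem_mlx yin; have := mem_mlx zin; rewrite /nested_or_disjoint.
    by case: ifP => _ /= /andP[? _] /andP[? _]; lia.
  + have [? _ ? _] := makeLam_bounds Hq'.
    exact: (split_nested_or_disjoint_block (ltnW LR) yin jle).
- have [g1 _ g3 _] := makeLam_bounds Hp.
  case=> [|_ e|_ _ ->|z _ zin ->|j _ _ jle Hq']; first lia.
  + by rewrite e in ne.
  + have := mlxs_nth_bounds (ltnW LR) (leqW ile).
    have := mlxs_nth_bounds (i := i.+1) (ltnW LR) ile.
    by rewrite /nested_or_disjoint => ? ? /=; lia.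
  + by rewrite nested_or_disjointC; apply: (split_nested_or_disjoint_block (ltnW LR) zin ile).
  + have [k1 _ k3 _] := makeLam_bounds Hq'.
    have [ij|ji|eij] := ltngtP i j; last by apply: IH; rewrite eij.
    * have := mlxs_nth_mono (ltnW LR) ij (leqW jle).
      by rewrite /nested_or_disjoint; lia.
    * have := mlxs_nth_mono (ltnW LR) ji (leqW ile).
      by rewrite /nested_or_disjoint; lia.
Qed.
End MakeLamIntervals.

Lemma ltr_1Dfrac_nat (c k p q : nat) : (0 < q)%N ->
  ((c%:R : rat) < (1 + p%:R / q%:R) * k%:R)%R = (q * c < (q + p) * k)%N.
Proof.
move=> q_gt0; rewrite -(@ltr_pM2r _ q%:R) ?ltr0n // -(ltr_nat rat) mulnC !natrM natrD.
congr (_ < _)%R; field; by rewrite pnatr_eq0 -lt0n.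
Qed.

Section CutValues.
Variables (V : finType) (mu : V -> V -> nat) (k : nat).
Hypothesis mu_sym : forall u v, mu u v = mu v u.

Lemma NMC_etaE S : NMC mu k etaNMC S = is_cut S && (40 * cutval mu S < 41 * k).
Proof. by rewrite /NMC /etaNMC (ltr_1Dfrac_nat _ _ 1). Qed.

Lemma NMC_fifthE S : NMC mu k (1 / 5%:R)%R S = is_cut S && (5 * cutval mu S < 6 * k).
Proof. by rewrite /NMC (ltr_1Dfrac_nat _ _ 1). Qed.

Lemma NMC_4etaE S : NMC mu k (4%:R * etaNMC)%R S = is_cut S && (10 * cutval mu S < 11 * k).
Proof.
by rewrite /NMC /etaNMC mul1r (ltr_1Dfrac_nat _ _ 4) // -[in RHS](@ltn_pmul2l 4) // !mulnA.
Qed.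

Lemma cutval_double S :
  (cutval mu S).*2 = \sum_u \sum_v ((u \in S) != (v \in S)) * mu u v.
Proof.
have cutvalE T : cutval mu T = \sum_u \sum_v ((u \in T) && (v \notin T)) * mu u v.
  rewrite /cutval big_mkcond; apply: eq_bigr => u _; case: (u \in T).
    rewrite big_mkcond; apply: eq_bigr => v _.
    by rewrite inE; case: (v \in T); rewrite ?mul0n ?mul1n.
  by rewrite big1 // => v _; rewrite mul0n.
rewrite -addnn {1}cutvalE cutvalE [in X in _ + X]exchange_big -big_split.
apply: eq_bigr => u _; rewrite -big_split; apply: eq_bigr => v _ /=.
by rewrite mu_sym; case: (u \in S); case: (v \in S); rewrite /= ?mul0n ?mul1n ?addn0.
Qed.

Lemma cutval_submod A B :
  cutval mu (A :&: B) + cutval mu (A :|: B) <= cutval mu A + cutval mu B.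
Proof.
rewrite -leq_double !doubleD !cutval_double -!big_split leq_sum // => u _.
rewrite -!big_split leq_sum // => v _ /=; rewrite !inE.
by case: (u \in A); case: (u \in B); case: (v \in A); case: (v \in B) => /=; lia.
Qed.

Lemma cutval_posimod A B :
  cutval mu (A :\: B) + cutval mu (B :\: A) <= cutval mu A + cutval mu B.
Proof.
rewrite -leq_double !doubleD !cutval_double -!big_split leq_sum // => u _.
rewrite -!big_split leq_sum // => v _ /=; rewrite !inE.
by case: (u \in A); case: (u \in B); case: (v \in A); case: (v \in B) => /=; lia.
Qed.

Lemma is_cut_sep (S : {set V}) u v : u \in S -> v \notin S -> is_cut S.
Proof.
move=> uS vS; apply/andP; split; apply/eqP => S_eq.
  by rewrite S_eq inE in uS.
by rewrite S_eq inE in vS.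
Qed.

Lemma cross_is_cut (A B : {set V}) : cross A B ->
  [/\ is_cut (A :&: B), is_cut (A :|: B), is_cut (A :\: B) & is_cut (B :\: A)].
Proof.
case/and4P => /set0Pn[x] /setIP[xA xB] /set0Pn[y] /setDP[yA yB]
               /set0Pn[z] /setDP[zB zA] /set0Pn[w]; rewrite !inE negb_or => /andP[wA wB].
split; [apply: (is_cut_sep (u := x) (v := w)) | apply: (is_cut_sep (u := x) (v := w)) |
        apply: (is_cut_sep (u := y) (v := w)) | apply: (is_cut_sep (u := z) (v := w))];
  by rewrite !inE ?xA ?xB ?yA ?yB ?zA ?zB ?(negbTE wA) ?(negbTE wB) ?andbF.
Qed.

Hypothesis mincut : forall S, is_cut S -> k <= cutval mu S.

(* 21/20 = 1 + 2 eta: uncrossing two eta-NMCs yields 2eta-NMCs. *)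
Lemma uncross_NMC_eta A B S : NMC mu k etaNMC A -> NMC mu k etaNMC B -> cross A B ->
  S \in [:: A :&: B; A :|: B; A :\: B; B :\: A] ->
  is_cut S && (20 * cutval mu S < 21 * k).
Proof.
rewrite !NMC_etaE => /andP[_ cA] /andP[_ cB] AB.
have [cutI cutU cutAB cutBA] := cross_is_cut AB.
have := mincut cutI; have := mincut cutU; have := mincut cutAB; have := mincut cutBA.
have := cutval_submod A B; have := cutval_posimod A B.
by rewrite !inE => ? ? ? ? ? ? /or4P[] /eqP->; rewrite ?cutI ?cutU ?cutAB ?cutBA /=; lia.
Qed.

Lemma special_cut_bound n C a S :
  special_cut mu k C n a S -> is_cut S && (20 * cutval mu S < 21 * k).
Proof.
case/orP => [|/existsP[l1 /existsP[r1 /existsP[l2 /existsP[r2]]]]].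
  by rewrite NMC_etaE => /andP[-> ?] /=; lia.
by case/and5P => _ _ NA NB /andP[AB SA]; apply: uncross_NMC_eta NA NB AB SA.
Qed.

Lemma crossing_diff_bound A B :
  20 * cutval mu A < 21 * k -> 20 * cutval mu B < 21 * k -> cross A B ->
  is_cut (A :\: B) && (10 * cutval mu (A :\: B) < 11 * k).
Proof.
move=> cA cB AB; have [_ _ -> cutBA] := cross_is_cut AB.
by have := mincut cutBA; have := cutval_posimod A B; lia.
Qed.
End CutValues.

Section CanonicalCuts.
Variables (V : finType) (mu : V -> V -> nat) (k : nat) (C : {set {set V}}).
Variables (n : nat) (a : nat -> {set V}).
Hypothesis mu_sym : forall u v, mu u v = mu v u.
Hypothesis mincut : forall S, is_cut S -> k <= cutval mu S.
Hypothesis outside_atom : forall i, i < n -> a i \in atoms C.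
Hypothesis outside_inj : {in gtn n &, injective a}.
Hypothesis canon_uniq : forall l r S S', valid_lr n l r ->
  shadow_witness mu k C n a l r S -> shadow_witness mu k C n a l r S' -> S = S'.
Hypothesis canon_cross : forall l r l' r',
  shadow mu k C n a l r -> shadow mu k C n a l' r' ->
  cross (canon mu k C n a l r) (canon mu k C n a l' r')
  = crossI n a (intv n a l r) (intv n a l' r').

Lemma union_of_atomsD A B :
  union_of_atoms C A -> union_of_atoms C B -> union_of_atoms C (A :\: B).
Proof.
move=> /forallP uA /forallP uB; apply/forallP => u; apply/forallP => v; apply/implyP => uv.
have /eqP := implyP (forallP (uA u) v) uv; have /eqP := implyP (forallP (uB u) v) uv.
by rewrite !inE => -> ->.
Qed.

Lemma atom_subset_union u S : union_of_atoms C S ->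
  ([set v | equivC C u v] \subset S) = (u \in S).
Proof.
move=> /forallP /(_ u) /forallP uS; apply/subsetP/idP => [|Su v].
  by apply; rewrite inE; apply/forallP => T; apply/implyP.
by rewrite inE => uv; have /eqP <- := implyP (uS v) uv.
Qed.

Lemma Oset_setD A B : union_of_atoms C A -> union_of_atoms C B ->
  Oset n a (A :\: B) = Oset n a A :\: Oset n a B.
Proof.
move=> uA uB; apply/setP => O; rewrite !inE.
case: mapP => [[i]|] //=; rewrite mem_iota => /andP[_ lt_in] ->.
have /imsetP[u _ ->] := outside_atom lt_in.
by rewrite !atom_subset_union ?union_of_atomsD // inE.
Qed.

Lemma canonP l r : shadow mu k C n a l r ->
  shadow_witness mu k C n a l r (canon mu k C n a l r).
Proof.
case/andP => _ /existsP[S wS]; rewrite /canon; case: pickP => [//|none].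
by rewrite none in wS.
Qed.

Lemma special_canon_NMC l r : special mu k C n a l r ->
  NMC mu k (4%:R * etaNMC)%R (canon mu k C n a l r).
Proof.
case/andP => _ /(special_cut_bound mu_sym mincut) /andP[cutS bS].
by rewrite NMC_4etaE cutS /=; lia.
Qed.

Lemma Fcond_canon L R : valid_lr n L R -> Fcond mu k C n a L R ->
  shadow mu k C n a L R /\ NMC mu k (4%:R * etaNMC)%R (canon mu k C n a L R).
Proof.
move=> vLR; case/orP => [spLR|]; first by case/andP: (spLR) => sh _; split=> //;
  apply: special_canon_NMC.
case/existsP => l1 /existsP[r1 /existsP[l2 /existsP[r2]]].
case/and4P => /andP[sh1 sp1] /andP[sh2 sp2] crI /eqP eI.
set A := canon mu k C n a l1 r1 in sp1; set B := canon mu k C n a l2 r2 in sp2.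
have /and3P[_ uA /eqP OA] := canonP sh1; have /and3P[_ uB /eqP OB] := canonP sh2.
have /andP[_ bA] := special_cut_bound mu_sym mincut sp1.
have /andP[_ bB] := special_cut_bound mu_sym mincut sp2.
have /andP[cutAB bAB] : is_cut (A :\: B) && (10 * cutval mu (A :\: B) < 11 * k).
  by apply: crossing_diff_bound => //; rewrite canon_cross.
have wAB : shadow_witness mu k C n a L R (A :\: B).
  apply/and3P; split; last by rewrite Oset_setD // OA OB eI.
    by rewrite NMC_fifthE cutAB /=; lia.
  exact: union_of_atomsD.
have shLR : shadow mu k C n a L R by rewrite /shadow vLR; apply/existsP; exists (A :\: B).
split=> //; rewrite (canon_uniq vLR (canonP shLR) wAB) NMC_4etaE cutAB /=; lia.
Qed.

Lemma intv_subset l r l' r' : l <= l' -> r' <= r -> intv n a l' r' \subset intv n a l r.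
Proof.
move=> ll' r'r; apply/subsetP => A; rewrite !inE => /mapP[i]; rewrite mem_iota => i_in ->.
by apply/mapP; exists i; rewrite // mem_iota; lia.
Qed.

Lemma intv_disjoint l r l' r' : r <= l' -> r' <= n -> intv n a l r :&: intv n a l' r' = set0.
Proof.
move=> rl' r'n; apply/setP => A; rewrite !inE; apply/negbTE/andP.
case=> /mapP[i]; rewrite mem_iota => i_in -> /mapP[j]; rewrite mem_iota => j_in.
by rewrite !modn_small; try lia; move/outside_inj; rewrite !inE; lia.
Qed.

Lemma nested_or_disjoint_crossIF l r l' r' : r <= n -> r' <= n ->
  nested_or_disjoint (l, r) (l', r') -> ~~ crossI n a (intv n a l r) (intv n a l' r').
Proof.
move=> rn r'n; rewrite /nested_or_disjoint /crossI /=.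
case/or4P => [rl'|r'l|/andP[ll' r'r]|/andP[l'l rr']].
- by rewrite intv_disjoint ?eqxx.
- by rewrite setIC intv_disjoint ?eqxx.
- by rewrite (setD_eq0 (intv n a l' r')) intv_subset ?andbF.
- by rewrite (setD_eq0 (intv n a l r)) intv_subset ?andbF.
Qed.

Lemma makeLam_canon_NMC l r :
  makeLam (special mu k C n a) (Fcond mu k C n a) (@pair nat nat) 1 n 0 0 (l, r) ->
  [/\ shadow mu k C n a l r, NMC mu k (4%:R * etaNMC)%R (canon mu k C n a l r) & r <= n].
Proof.
case/makeLam_bounds => /= l_ge1 lr rn /orP[spl|Fl].
  by split=> //; [case/andP: spl | apply: special_canon_NMC].
have [] // := Fcond_canon _ Fl; exact/and3P.
Qed.
End CanonicalCuts.

Lemma polygon_rep_outside_atom (R : realType) V (C : {set {set V}}) n Ds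
    (x : {set V} -> R * R) a :
  polygon_rep C n Ds x a -> forall i, i < n -> a i \in atoms C.
Proof. by case=> _ [_ _ _ out _] i /out []. Qed.

Lemma polygon_rep_outside_inj (R : realType) V (C : {set {set V}}) n Ds
    (x : {set V} -> R * R) a :
  polygon_rep C n Ds x a -> {in gtn n &, injective a}.
Proof.
case=> _ [_ _ _ out sides] i j lt_in lt_jn aij; apply/eqP; apply: contraT => /eqP ij.
have [d dD] := sides i j lt_in lt_jn ij.
by rewrite -(out i lt_in).2 // -(out j lt_jn).2 // aij eqxx.
Qed.

Theorem mainTheorem4
  (V : finType) (mu : V -> V -> nat) (k : nat)
  (C : {set {set V}})
  (R : realType) (n : nat) (Ds : seq (nat * nat))
  (x : {set V} -> R * R) (a : nat -> {set V}) :
  (forall u v, mu u v = mu v u) ->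
  is_mincut_value mu k ->
  is_nmc_component mu k etaNMC C ->
  more_than_one_cut C ->
  polygon_rep C n Ds x a ->
  (forall l r S S', valid_lr n l r -> shadow_witness mu k C n a l r S ->
     shadow_witness mu k C n a l r S' -> S = S') ->
  (forall l r l' r', shadow mu k C n a l r -> shadow mu k C n a l' r' ->
     cross (canon mu k C n a l r) (canon mu k C n a l' r')
     = crossI n a (intv n a l r) (intv n a l' r')) ->
  let inL := makeLam (special mu k C n a) (Fcond mu k C n a) (canon mu k C n a) 1 n 0 0 in
  laminar inL /\ (forall S, inL S -> NMC mu k (4%:R * etaNMC)%R S).
Proof.
move=> mu_sym [_ mincut] _ _ poly uniq cross_canon inL.
have out_atom := polygon_rep_outside_atom poly.
have out_inj := polygon_rep_outside_inj poly.
have member := makeLam_canon_NMC mu_sym mincut out_atom uniq cross_canon.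
split=> [S T HS HT|S HS]; last first.
  by have [l [r [Hlr ->]]] := makeLam_interval HS; case: (member _ _ Hlr).
have [l [r [Hlr ->]]] := makeLam_interval HS.
have [l' [r' [Hlr' ->]]] := makeLam_interval HT.
have [sh _ rn] := member _ _ Hlr; have [sh' _ r'n] := member _ _ Hlr'.
rewrite cross_canon //; apply: (nested_or_disjoint_crossIF out_inj rn r'n).
exact: makeLam_nested_or_disjoint Hlr Hlr'.
Qed.
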